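(* Let $m\ge 2$, let $f(t)=t^m-\sum_{s=0}^{m-1}u_{m-s}t^s$ with $u_1,\dots,u_m\in\mathbb{Q}$ have $m$ distinct nonzero roots $\alpha_1,\dots,\alpha_m$, let $\mathbf{x}=(x_0,\dots,x_{m-1})\in\mathbb{Q}^m$ and $M=\sum_{n=0}^{m-1}x_nA^n$ with $A$ the companion matrix of $f$. Then for every $n\ge1$ for which the denominators are nonzero, $$\frac{M^n_{m,m-1}}{M^n_{1,m}}=\frac{M^n_{m,1}}{M^n_{1,2}}=\frac{1}{(-1)^{m-1}\prod_{h=1}^m\alpha_h};$$ in particular these ratios do not depend on $n$.
   Context: The companion matrix $A=(A_{a,b})$ of $f(t)=t^m-\sum_{s=0}^{m-1}u_{m-s}t^s$ is the $m\times m$ matrix with $A_{a+1,a}=1$ for $a=1,\dots,m-1$, last column $(A_{1,m},\dots,A_{m,m})^T=(u_m,u_{m-1},\dots,u_1)^T$, and all other entries $0$. $M^n_{a,b}$ denotes the $(a,b)$-entry of the $n$-th power of $M$. *)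

From HB Require Import structures.
From mathcomp Require Import all_boot all_order all_algebra all_field.
Set Implicit Arguments. Unset Strict Implicit. Unset Printing Implicit Defensive.
Import Order.TTheory GRing.Theory Num.Theory.
Local Open Scope ring_scope.

Definition fpoly (m : nat) (u : nat -> rat) : {poly rat} :=
  'X^m - \sum_(s < m) (u (m - s)%N)%:P * 'X^s.

(* Companion matrix (0-based indices i,j stand for 1-based a = i+1, b = j+1):
   A_{a+1,a} = 1, last column (A_{1,m},...,A_{m,m}) = (u_m,...,u_1),
   A_{a,m} = u_{m-a+1} i.e. entry (i, m-1) = u (m - i). *)
Definition companion (m : nat) (u : nat -> rat) : 'M[rat]_m :=
  \matrix_(i < m, j < m)
    (if j.+1 == m then u (m - i)%N else if i == j.+1 :> nat then 1 else 0).

(* M = sum_{n=0}^{m-1} x_n A^n, for m = k.+1 (so that 'M_m is a ring). *)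
Definition Mmat (k : nat) (u : nat -> rat) (x : nat -> rat) : 'M[rat]_k.+1 :=
  \sum_(n < k.+1) x n *: (companion k.+1 u) ^+ n.

Definition ent (k : nat) (B : 'M[rat]_k.+1) (a b : nat) : rat :=
  B (inord a.-1) (inord b.-1).

From HB Require Import structures.
From mathcomp Require Import all_boot all_order all_algebra all_field.
From mathcomp Require Import zify.
Import Order.TTheory GRing.Theory Num.Theory.
Local Open Scope ring_scope.

(* Every power of M is a polynomial in the companion matrix A, so it commutes
   with A.  The first row of A is (0, ..., 0, u_m), hence comparing the first
   rows of A M^n and M^n A gives M^n_{1,b+1} = u_m M^n_{m,b} for b < m.  By
   Vieta, u_m = (-1)^(m-1) alpha_1 ... alpha_m, which yields both ratios. *)

Lemma horner0_fpoly (k : nat) (u : nat -> rat) : (fpoly k.+1 u).[0] = - u k.+1.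
Proof.
rewrite /fpoly hornerD hornerN hornerXn horner_sum expr0n /= sub0r.
rewrite big_ord_recl big1 => [|i _]; last by rewrite hornerCM hornerXn expr0n mulr0.
by rewrite hornerCM hornerXn expr0n mulr1 addr0 subn0.
Qed.

Lemma ratr_u_prod_roots (k : nat) (u : nat -> rat) (alpha : 'I_k.+1 -> algC) :
  map_poly ratr (fpoly k.+1 u) = \prod_(h < k.+1) ('X - (alpha h)%:P) ->
  ratr (u k.+1) = (-1) ^+ k * \prod_(h < k.+1) alpha h.
Proof.
move=> /(congr1 (horner^~ 0)).
rewrite -(rmorph0 ratr) horner_map rmorph0 horner_prod horner0_fpoly rmorphN.
under eq_bigr do rewrite hornerXsubC sub0r.
rewrite prodrN card_ord => /eqP; rewrite eqr_oppLR => /eqP ->.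
by rewrite exprS mulN1r mulNr opprK.
Qed.

Lemma mulmx_companion_row0 (k : nat) (u : nat -> rat) (P : 'M[rat]_k.+1) j :
  (companion k.+1 u *m P) ord0 j = u k.+1 * P ord_max j.
Proof.
rewrite !mxE (bigD1 ord_max) //= big1 => [|b nb]; last first.
  rewrite mxE /= ifF ?mul0r //; apply/negbTE; apply: contra nb => /eqP hb.
  by apply/eqP/val_inj => /=; lia.
by rewrite mxE eqxx subn0 addr0.
Qed.

Lemma mulmx_companion_shift (k : nat) (u : nat -> rat) (P : 'M[rat]_k.+1) i (j : nat) :
  (j < k)%N -> (P *m companion k.+1 u) i (inord j) = P i (inord j.+1).
Proof.
move=> ltjk; rewrite !mxE (bigD1 (inord j.+1)) //= big1 => [|b nb]; last first.
  rewrite mxE inordK; last lia.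
  rewrite ifF; last by apply/negbTE; lia.
  rewrite ifF ?mulr0 //; apply/negbTE; apply: contra nb => /eqP hb.
  by apply/eqP/val_inj; rewrite /= inordK //; lia.
rewrite mxE !inordK; try lia.
by rewrite ifF ?eqxx ?mulr1 ?addr0 //; apply/negbTE; lia.
Qed.

Lemma comm_companion_row0 (k : nat) (u : nat -> rat) (P : 'M[rat]_k.+1) (j : nat) :
  GRing.comm (companion k.+1 u) P -> (j < k)%N ->
  P (inord 0) (inord j.+1) = u k.+1 * P (inord k) (inord j).
Proof.
move=> cAP ltjk; rewrite (inord_val (@ord0 k)) (inord_val (@ord_max k)).
rewrite -mulmx_companion_row0 -(mulmx_companion_shift _ u) //.
by rewrite mulmxE cAP.
Qed.

Lemma comm_companion_Mmat_exp (k : nat) (u x : nat -> rat) (n : nat) :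
  GRing.comm (companion k.+1 u) (Mmat k u x ^+ n).
Proof.
apply/commrX/commr_sum => i _.
by rewrite /GRing.comm -scalerAl -scalerAr (commrX _ (commr_refl _)).
Qed.

Theorem mainTheorem3 (k : nat) (u x : nat -> rat) (alpha : 'I_k.+2 -> algC)
  (alpha_inj : injective alpha)
  (alpha_nz : forall h, alpha h != 0)
  (f_roots : map_poly ratr (fpoly k.+2 u) = \prod_(h < k.+2) ('X - (alpha h)%:P))
  (n : nat) (hn : (1 <= n)%N)
  (d1 : ent (Mmat k.+1 u x ^+ n) 1 k.+2 != 0)
  (d2 : ent (Mmat k.+1 u x ^+ n) 1 2 != 0) :
  let c := 1 / ((-1) ^+ (k.+2 - 1) * \prod_(h < k.+2) alpha h) in
  ratr (ent (Mmat k.+1 u x ^+ n) k.+2 k.+1) / ratr (ent (Mmat k.+1 u x ^+ n) 1 k.+2) = c /\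
  ratr (ent (Mmat k.+1 u x ^+ n) k.+2 1) / ratr (ent (Mmat k.+1 u x ^+ n) 1 2) = c.
Proof.
move=> c; set P := Mmat k.+1 u x ^+ n.
have row0 j := comm_companion_row0 _ _ _ j (comm_companion_Mmat_exp k.+1 u x n).
have top_right : ent P 1 k.+2 = u k.+2 * ent P k.+2 k.+1 by exact: row0.
have top_second : ent P 1 2 = u k.+2 * ent P k.+2 1 by exact: row0.
rewrite -/P top_right top_second in d1 d2 *.
have ratio_inv (a b : rat) : b != 0 -> ratr b / ratr (a * b) = 1 / ratr a :> algC.
  by move=> nzb; rewrite rmorphM invfM mulrCA divff ?fmorph_eq0 // mulr1 div1r.
move: d1 d2; rewrite !mulf_eq0 !negb_or => /andP[_ nz1] /andP[_ nz2].
rewrite /c subn1 -(ratr_u_prod_roots _ _ _ f_roots).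
by rewrite !(ratio_inv _ _ nz1, ratio_inv _ _ nz2); split.
Qed.
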